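(* For every $a\in(0,\pi/4)$ one has $\Omega(a)=\Xi(-\beta(a))$, where $\beta(a)\in(0,\pi/2)$ is defined by $\cos^4\beta(a)=4\sin^2a\cos^2a$. In particular $\lim_{a\to0+}\Omega(a)=\frac\pi2$ equals $\lim_{\beta\to\pi/2}\Xi(-\beta)$.
   Context: $\Omega(a)=\sin a\cos a\int_a^{\pi/2-a}\frac{d\nu}{\cos\nu\sqrt{\sin^2\nu\cos^2\nu-\sin^2a\cos^2a}}$ for $a\in(0,\pi/4)$. For $b\in(-\pi/2,0)$, $\Xi(b)=\cos^2b\int_b^{-b}\frac{d\varphi}{\cos\varphi\sqrt{\cos^4\varphi-\cos^4b}}$. ($\Omega(a)$ is the increment of $\lambda$ along half an oscillation of the unit-speed geodesic of $4\pi^2\sin^2\nu(d\nu^2+\cos^2\nu d\lambda^2)$ with minimum $\nu=a$; $\Xi(b)$ is the increment of $\theta$ along half an oscillation of the unit-speed geodesic of $4\pi^2\cos^2\varphi(d\varphi^2+\cos^2\varphi d\theta^2)$ with minimum $\varphi=b$.) *)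

From Stdlib Require Import Reals Lra ClassicalEpsilon.
Open Scope R_scope.

(* Improper Riemann integral over the open interval (a,b), allowing
   singularities at both endpoints: l is the limit of int_u^v f as
   u -> a+ and v -> b-. *)
Definition improper_integral (f : R -> R) (a b l : R) : Prop :=
  a < b /\
  (forall u v, a < u -> u <= v -> v < b -> inhabited (Riemann_integrable f u v)) /\
  (forall eps, eps > 0 -> exists delta, delta > 0 /\
     forall u v (pr : Riemann_integrable f u v),
       a < u -> u < a + delta -> b - delta < v -> v < b ->
       Rabs (RiemannInt pr - l) < eps).

(* The value of the improper integral (chosen classically; meaningful
   when the integral converges). *)
Definition improper_int (f : R -> R) (a b : R) : R :=
  epsilon (inhabits 0) (fun l => improper_integral f a b l).

Definition Omega_integrand (a : R) (nu : R) : R :=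
  / (cos nu * sqrt ((sin nu)^2 * (cos nu)^2 - (sin a)^2 * (cos a)^2)).

Definition Omega (a : R) : R :=
  sin a * cos a * improper_int (Omega_integrand a) a (PI/2 - a).

Definition Xi_integrand (b : R) (phi : R) : R :=
  / (cos phi * sqrt ((cos phi)^4 - (cos b)^4)).

Definition Xi (b : R) : R :=
  (cos b)^2 * improper_int (Xi_integrand b) b (- b).

(* Both quantities are reduced to one integral
     Phi c = int_{-PI/2}^{PI/2} sqrt (E_c / (1 + E_c)) ds,   E_c = c + (1-c) sin^2 s,
   by a change of variables s = asin (w(.)) in the improper integral:
   - for Xi(-beta), w = cos beta tan phi / sin beta gives
     Xi(-beta) = cos^2 beta * Phi (cos^2 beta) / cos^2 beta = Phi (cos^2 beta);
   - for Omega(a), w = sqrt (c/(1-c)) (sin nu - cos nu) / sqrt (sin 2nu) with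
     c = sin 2a turns the integrand into (2/c) k_c plus an odd function of s,
     so Omega(a) = sin a cos a * (2/c) Phi c = Phi (sin 2a).
   The relation cos^4 beta = 4 sin^2 a cos^2 a says cos^2 beta = sin 2a, hence
   Omega(a) = Xi(-beta).  Finally |Phi c - PI/2| <= PI sqrt c with Phi 0 = PI/2,
   and sin 2a -> 0 as a -> 0+, cos^2 beta -> 0 as beta -> PI/2, giving the limits. *)

From Stdlib Require Import Reals Lra ClassicalEpsilon.
From Coquelicot Require Import Coquelicot.
Open Scope R_scope.

Lemma improper_integral_unique f a b l1 l2 :
  improper_integral f a b l1 -> improper_integral f a b l2 -> l1 = l2.
Proof.
  intros [Hab [Hint H1]] [_ [_ H2]].
  apply Rminus_diag_uniq, Rabs_eq_0, Rle_antisym; [| apply Rabs_pos].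
  apply Rnot_lt_le; intro Hpos.
  set (e := Rabs (l1 - l2) / 2).
  destruct (H1 e) as [d1 [Hd1 P1]]; [unfold e; lra|].
  destruct (H2 e) as [d2 [Hd2 P2]]; [unfold e; lra|].
  (* evaluate both approximations at the same truncation [a+d, b-d] *)
  set (d := Rmin (Rmin d1 d2) ((b - a) / 2) / 2).
  pose proof (Rmin_l (Rmin d1 d2) ((b - a) / 2)).
  pose proof (Rmin_r (Rmin d1 d2) ((b - a) / 2)).
  pose proof (Rmin_l d1 d2). pose proof (Rmin_r d1 d2).
  assert (Hd : 0 < Rmin (Rmin d1 d2) ((b - a) / 2))
    by (apply Rmin_glb_lt; [apply Rmin_glb_lt|]; lra).
  destruct (Hint (a + d) (b - d)) as [pr]; unfold d; try lra.
  assert (A1 : Rabs (RiemannInt pr - l1) < e) by (apply P1; unfold d; lra).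
  assert (A2 : Rabs (RiemannInt pr - l2) < e) by (apply P2; unfold d; lra).
  assert (Rabs (l1 - l2) <= Rabs (RiemannInt pr - l1) + Rabs (RiemannInt pr - l2)).
  { replace (l1 - l2) with (- (RiemannInt pr - l1) + (RiemannInt pr - l2)) by ring.
    rewrite <- (Rabs_Ropp (RiemannInt pr - l1)). apply Rabs_triang. }
  unfold e in *; lra.
Qed.

Lemma improper_int_eq f a b l : improper_integral f a b l -> improper_int f a b = l.
Proof.
  intro H. unfold improper_int.
  apply (improper_integral_unique f a b); [| exact H].
  apply (epsilon_spec (inhabits 0) (fun l => improper_integral f a b l)).
  now exists l.
Qed.

Lemma continuous_eps (F : R -> R) p : continuous F p ->
  forall e, e > 0 -> exists d, d > 0 /\ forall x, Rabs (x - p) < d -> Rabs (F x - F p) < e.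
Proof.
  intros H e He. apply continuity_pt_filterlim in H.
  destruct (H e He) as [d [Hd P]].
  exists d; split; [exact Hd|]. intros x Hx.
  destruct (Req_dec x p) as [->|Hne].
  - rewrite Rminus_diag_eq, Rabs_R0; [lra | reflexivity].
  - apply (P x). repeat split; auto.
Qed.

Lemma improper_integral_FTC (f F : R -> R) p q : p < q ->
  continuous F p -> continuous F q ->
  (forall x, p < x < q -> is_derive F x (f x) /\ continuous f x) ->
  improper_integral f p q (F q - F p).
Proof.
  intros Hpq Cp Cq HD.
  assert (Hint : forall u v, p < u -> u <= v -> v < q -> is_RInt f u v (F v - F u)).
  { intros u v H1 H2 H3.
    apply (is_RInt_derive F f u v); intros x Hx;
      rewrite Rmin_left, Rmax_right in Hx by lra; apply HD; lra. }
  split; [exact Hpq | split].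
  - intros u v H1 H2 H3. constructor.
    apply ex_RInt_Reals_0. eexists; apply Hint; auto.
  - intros e He.
    destruct (continuous_eps F p Cp (e/2)) as [d1 [Hd1 P1]]; [lra|].
    destruct (continuous_eps F q Cq (e/2)) as [d2 [Hd2 P2]]; [lra|].
    (* a small truncation keeps u <= v and both ends close to p and q *)
    exists (Rmin (Rmin d1 d2) ((q - p) / 2)).
    pose proof (Rmin_l (Rmin d1 d2) ((q - p) / 2)).
    pose proof (Rmin_r (Rmin d1 d2) ((q - p) / 2)).
    pose proof (Rmin_l d1 d2). pose proof (Rmin_r d1 d2).
    split; [apply Rmin_glb_lt; [apply Rmin_glb_lt|]; lra|].
    intros u v pr Hu1 Hu2 Hv1 Hv2.
    rewrite <- RInt_Reals, (is_RInt_unique f u v (F v - F u)) by (apply Hint; lra).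
    assert (A1 : Rabs (F u - F p) < e/2) by (apply P1; rewrite Rabs_right; lra).
    assert (A2 : Rabs (F v - F q) < e/2) by (apply P2; rewrite Rabs_left; lra).
    replace (F v - F u - (F q - F p)) with ((F v - F q) + - (F u - F p)) by ring.
    eapply Rle_lt_trans; [apply Rabs_triang|]. rewrite Rabs_Ropp. lra.
Qed.

Lemma continuous_sqrt_comp (h : R -> R) x : continuous h x -> 0 <= h x ->
  continuous (fun y => sqrt (h y)) x.
Proof.
  intros Hh H. apply (continuous_comp h sqrt); [exact Hh|].
  apply continuity_pt_filterlim, continuity_pt_sqrt, H.
Qed.

Lemma is_derive_eq (f : R -> R) x l1 l2 : is_derive f x l1 -> l1 = l2 -> is_derive f x l2.
Proof. now intros H <-. Qed.

Lemma sqrt_div_pow2 A B : 0 <= A -> 0 < B -> sqrt (A / B ^ 2) = sqrt A / B.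
Proof.
  intros HA HB. rewrite sqrt_div_alt by nra. now rewrite sqrt_pow2 by lra.
Qed.

Lemma sqrt_diff_le A B : 0 <= A -> 0 <= B -> Rabs (sqrt A - sqrt B) <= sqrt (Rabs (A - B)).
Proof.
  (* it suffices to treat B <= A, where (sqrt A - sqrt B)^2 <= A - B *)
  assert (K : forall A B, 0 <= B <= A -> Rabs (sqrt A - sqrt B) <= sqrt (Rabs (A - B))).
  { intros A0 B0 HB.
    pose proof (sqrt_le_1_alt _ _ (proj2 HB)). pose proof (sqrt_positivity B0 (proj1 HB)).
    assert (SA : sqrt A0 * sqrt A0 = A0) by (apply sqrt_sqrt; lra).
    assert (SB : sqrt B0 * sqrt B0 = B0) by (apply sqrt_sqrt; lra).
    rewrite !Rabs_right by lra.
    rewrite <- (sqrt_square (sqrt A0 - sqrt B0)) by lra.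
    apply sqrt_le_1_alt. nra. }
  intros HA HB. destruct (Rle_dec B A); [apply K; lra|].
  rewrite Rabs_minus_sym, (Rabs_minus_sym A). apply K; lra.
Qed.

Lemma asin_gt_of_sin_lt e x : 0 < e <= PI -> sin (PI/2 - e) < x -> PI/2 - e < asin x.
Proof.
  intros He Hx.
  destruct (Rle_dec 1 x) as [H1|H1].
  { unfold asin. destruct (Rle_dec x (-1)); [lra|]. destruct (Rle_dec 1 x); lra. }
  pose proof (SIN_bound (PI/2 - e)). pose proof (asin_bound x).
  apply Rnot_le_lt. intro Hle.
  assert (Hsin : sin (asin x) <= sin (PI/2 - e)).
  { destruct (Rle_lt_or_eq_dec _ _ Hle) as [Hl| ->]; [| lra].
    apply Rlt_le, sin_increasing_1; lra. }
  rewrite sin_asin in Hsin; lra.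
Qed.

Lemma asin_continuous_1 : continuous asin 1.
Proof.
  apply continuity_pt_filterlim. intros e He.
  pose proof PI_RGT_0. rewrite asin_1.
  set (e' := Rmin e PI).
  assert (e' <= e) by apply Rmin_l. assert (e' <= PI) by apply Rmin_r.
  assert (He' : 0 < e') by (apply Rmin_glb_lt; lra).
  assert (Hcos : cos e' < 1) by (rewrite <- cos_0; apply cos_decreasing_1; lra).
  exists (1 - sin (PI/2 - e')). rewrite sin_shift. split; [lra|].
  intros x [_ Hx]. simpl in *. unfold R_dist in *.
  pose proof (asin_bound x).
  assert (PI/2 - e' < asin x).
  { apply asin_gt_of_sin_lt; [lra|]. rewrite sin_shift.
    apply Rabs_def2 in Hx. lra. }
  rewrite Rabs_left1; lra.
Qed.

Lemma asin_continuous_m1 : continuous asin (-1).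
Proof.
  apply (continuous_ext (fun x : R => - asin (- x)) asin).
  { intro x. rewrite asin_opp. apply Ropp_involutive. }
  apply (continuous_opp (fun x => asin (- x))).
  apply (continuous_comp Ropp asin).
  - apply (continuous_opp (fun x : R => x)), continuous_id.
  - replace (- -1) with 1 by ring. apply asin_continuous_1.
Qed.

Lemma is_derive_asin x : -1 < x < 1 -> is_derive asin x (/ sqrt (1 - x^2)).
Proof.
  intro H. apply is_derive_Reals.
  apply (derive_pt_eq_1 _ _ _ (derivable_pt_asin x H)).
  rewrite derive_pt_asin. unfold Rsqr. replace (x^2) with (x*x) by ring.
  field. apply Rgt_not_eq, sqrt_lt_R0. nra.
Qed.

Lemma is_derive_RInt_0 (g : R -> R) x : (forall y, continuous g y) ->
  is_derive (fun y => RInt g 0 y) x (g x).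
Proof.
  intros Hc. apply (is_derive_RInt g (fun y => RInt g 0 y) 0); [| apply Hc].
  apply filter_forall. intro y.
  apply (RInt_correct (V := R_CompleteNormedModule)).
  apply (ex_RInt_continuous (V := R_CompleteNormedModule)). auto.
Qed.

Lemma improper_integral_asin_subst (g w f : R -> R) p q :
  p < q -> (forall s, continuous g s) ->
  continuous w p -> w p = -1 -> continuous w q -> w q = 1 ->
  (forall x, p < x < q -> -1 < w x < 1 /\ continuous f x /\
     exists dw, is_derive w x dw /\ f x = dw / sqrt (1 - w x ^ 2) * g (asin (w x))) ->
  improper_integral f p q (RInt g (-(PI/2)) (PI/2)).
Proof.
  intros Hpq Hg Cp Wp Cq Wq Hx.
  set (G := fun y => RInt g 0 y).
  assert (HG : forall y, is_derive G y (g y)) by (intro; apply is_derive_RInt_0, Hg).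
  assert (CG : forall z, continuous w z -> continuous asin (w z) ->
                 continuous (fun x => G (asin (w x))) z).
  { intros z Cw Ca. apply (continuous_comp w (fun y => G (asin y))); [exact Cw|].
    apply (continuous_comp asin G); [exact Ca|].
    apply (ex_derive_continuous (K := R_AbsRing) (V := R_NormedModule)).
    eexists; apply HG. }
  assert (Hval : RInt g (-(PI/2)) (PI/2) = G (asin (w q)) - G (asin (w p))).
  { assert (Hex : forall u v, ex_RInt g u v)
      by (intros; apply (ex_RInt_continuous (V := R_CompleteNormedModule)); auto).
    rewrite Wp, Wq. replace (-1) with (- (1)) by ring. rewrite asin_opp, asin_1.
    unfold G. rewrite <- (RInt_Chasles g (-(PI/2)) 0 (PI/2)), <- (opp_RInt_swap g (-(PI/2)) 0)
      by auto.
    unfold plus, opp; simpl; ring. }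
  rewrite Hval. apply (improper_integral_FTC f (fun x => G (asin (w x)))); [exact Hpq | | |].
  - apply CG; [exact Cp|]. rewrite Wp. apply asin_continuous_m1.
  - apply CG; [exact Cq|]. rewrite Wq. apply asin_continuous_1.
  - intros x Hpqx. destruct (Hx x Hpqx) as [Hw [Cf [dw [Hdw ->]]]]. split; [|exact Cf].
    eapply is_derive_eq.
    + apply (is_derive_comp (fun y => G (asin y)) w x); [| exact Hdw].
      apply (is_derive_comp G asin); [apply HG | apply is_derive_asin, Hw].
    + unfold scal; simpl; unfold mult; simpl. unfold Rdiv. ring.
Qed.

Lemma RInt_symmetric (f : R -> R) a : (forall x, continuous f x) ->
  RInt f (-a) a = RInt (fun x => f x + f (-x)) 0 a.
Proof.
  intro Hc.
  assert (Hex : forall (h : R -> R) u v, (forall x, continuous h x) -> ex_RInt h u v)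
    by (intros; apply (ex_RInt_continuous (V := R_CompleteNormedModule)); auto).
  assert (Hc' : forall x, continuous (fun y => f (- y)) x).
  { intro x. apply (continuous_comp Ropp f); [| apply Hc].
    apply (continuous_opp (fun y : R => y)), continuous_id. }
  assert (Href : RInt (fun x => f (-x)) 0 a = - RInt f 0 (-a)).
  { assert (H := RInt_correct _ _ _ (Hex f (-0) (-a) Hc)).
    apply is_RInt_comp_opp, is_RInt_unique in H. rewrite Ropp_0 in H.
    rewrite <- H, <- (RInt_opp (V := R_CompleteNormedModule)).
    - apply RInt_ext. intros. unfold opp; simpl. ring.
    - apply Hex. intro x. apply (continuous_opp (fun y => f (- y))), Hc'. }
  rewrite (RInt_plus (V := R_CompleteNormedModule) f) by (apply Hex; auto).
  rewrite Href, <- (RInt_Chasles f (-a) 0 a), <- (opp_RInt_swap f (-a) 0) by auto.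
  unfold plus, opp; simpl. ring.
Qed.

Lemma RInt_odd (f : R -> R) a : (forall x, continuous f x) -> (forall x, f (-x) = - f x) ->
  RInt f (-a) a = 0.
Proof.
  intros Hc Hodd. rewrite RInt_symmetric by exact Hc.
  rewrite (RInt_ext _ (fun _ => 0)) by (intros; rewrite Hodd; simpl; ring).
  rewrite RInt_const. apply (scal_zero_r (V := R_NormedModule)).
Qed.

Definition Efun (c s : R) : R := c + (1 - c) * sin s ^ 2.
Definition kfun (c s : R) : R := sqrt (Efun c s / (1 + Efun c s)).
Definition Phi (c : R) : R := RInt (kfun c) (-(PI/2)) (PI/2).

(* The odd companion of k_c: the Omega integrand, transported to the
   s-variable, is (2/c) k_c + kodd_c, and kodd_c integrates to zero. *)
Definition kodd (c s : R) : R :=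
  2 * sqrt (1 - c) / c * sin s * sqrt (Efun c s / ((1 + Efun c s) * (Efun c s + c))).

Lemma Efun_bounds c s : 0 <= c <= 1 -> c <= Efun c s <= 1.
Proof.
  intros Hc. unfold Efun. pose proof (sin2 s) as H. unfold Rsqr in H.
  pose proof (pow2_ge_0 (sin s)). pose proof (pow2_ge_0 (cos s)). nra.
Qed.

Lemma Efun_asin c w : -1 <= w <= 1 -> Efun c (asin w) = c + (1 - c) * w ^ 2.
Proof. intro H. unfold Efun. now rewrite sin_asin. Qed.

Lemma kfun_continuous c x : 0 <= c <= 1 -> continuous (kfun c) x.
Proof.
  intros Hc. pose proof (Efun_bounds c x Hc). unfold kfun.
  apply continuous_sqrt_comp; [| apply Rdiv_le_0_compat; lra].
  apply (ex_derive_continuous (K := R_AbsRing) (V := R_NormedModule)).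
  unfold Efun in *. auto_derive. lra.
Qed.

Lemma kodd_continuous c x : 0 < c <= 1 -> continuous (kodd c) x.
Proof.
  intros Hc. pose proof (Efun_bounds c x (conj (Rlt_le _ _ (proj1 Hc)) (proj2 Hc))).
  unfold kodd. apply (continuous_mult (fun s => 2 * sqrt (1 - c) / c * sin s)).
  - apply (ex_derive_continuous (K := R_AbsRing) (V := R_NormedModule)).
    auto_derive. lra.
  - apply continuous_sqrt_comp.
    + apply (ex_derive_continuous (K := R_AbsRing) (V := R_NormedModule)).
      unfold Efun in *. auto_derive. apply Rgt_not_eq, Rmult_lt_0_compat; lra.
    + apply Rdiv_le_0_compat; [lra|]. apply Rmult_lt_0_compat; lra.
Qed.

Lemma kfun_even c s : kfun c (-s) = kfun c s.
Proof. unfold kfun, Efun. rewrite sin_neg. now replace ((- sin s) ^ 2) with (sin s ^ 2) by ring. Qed.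

Lemma kodd_odd c s : kodd c (-s) = - kodd c s.
Proof.
  unfold kodd, Efun. rewrite sin_neg. replace ((- sin s) ^ 2) with (sin s ^ 2) by ring. ring.
Qed.

(* At c = 0 the integrand is |sin s| / sqrt (1 + sin^2 s), whose primitive on
   [0, PI/2] is  - asin (cos s / sqrt 2). *)
Lemma kfun_0 s : 0 <= sin s -> kfun 0 s = sin s / sqrt (1 + sin s ^ 2).
Proof.
  intro Hs. unfold kfun, Efun.
  replace (0 + (1 - 0) * sin s ^ 2) with (sin s ^ 2) by ring.
  rewrite sqrt_div by (nra || apply pow2_ge_0). now rewrite sqrt_pow2.
Qed.

Lemma is_derive_asin_cos s :
  is_derive (fun t => - asin (cos t / sqrt 2)) s (sin s / sqrt (1 + sin s ^ 2)).
Proof.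
  assert (S2 : 0 < sqrt 2) by apply Rlt_sqrt2_0.
  assert (S22 : sqrt 2 * sqrt 2 = 2) by (apply sqrt_sqrt; lra).
  assert (Hsc : sin s ^ 2 + cos s ^ 2 = 1)
    by (pose proof (sin2_cos2 s) as H; unfold Rsqr in H; lra).
  assert (Hsq : (cos s / sqrt 2) ^ 2 = cos s ^ 2 / 2).
  { replace (cos s ^ 2 / 2) with (cos s ^ 2 / (sqrt 2 * sqrt 2)) by now rewrite S22.
    field. lra. }
  assert (Hrange : -1 < cos s / sqrt 2 < 1) by (pose proof (pow2_ge_0 (sin s)); nra).
  assert (Hroot : sqrt 2 * sqrt (1 - (cos s / sqrt 2) ^ 2) = sqrt (1 + sin s ^ 2)).
  { rewrite <- sqrt_mult by (lra || nra). f_equal. rewrite Hsq. lra. }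
  assert (Hpos : 0 < sqrt (1 - (cos s / sqrt 2) ^ 2)) by (apply sqrt_lt_R0; nra).
  eapply is_derive_eq.
  - apply (is_derive_opp (fun t => asin (cos t / sqrt 2))).
    apply (is_derive_comp asin (fun t => cos t / sqrt 2)).
    + apply is_derive_asin, Hrange.
    + auto_derive; [lra | reflexivity].
  - rewrite <- Hroot. unfold scal, opp; simpl; unfold mult; simpl in *. field. split; lra.
Qed.

Lemma Phi_0 : Phi 0 = PI / 2.
Proof.
  set (F := fun t => - asin (cos t / sqrt 2)).
  assert (Hquarter : is_RInt (fun s => sin s / sqrt (1 + sin s ^ 2)) 0 (PI/2) (PI/4)).
  { replace (PI/4) with (minus (F (PI/2)) (F 0)).
    - apply (is_RInt_derive F); intros s _; [apply is_derive_asin_cos|].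
      apply (ex_derive_continuous (K := R_AbsRing) (V := R_NormedModule)).
      assert (0 < sqrt (1 + sin s ^ 2)) by (apply sqrt_lt_R0; nra).
      auto_derive. simpl in *. repeat split; nra.
    - unfold F, minus, plus, opp; simpl.
      rewrite cos_PI2, cos_0. unfold Rdiv. rewrite Rmult_0_l, Rmult_1_l, asin_0, asin_inv_sqrt2.
      match goal with |- ?x = ?y => change (@eq R x y) end. lra. }
  unfold Phi. rewrite RInt_symmetric by (intro; apply kfun_continuous; lra).
  rewrite (RInt_ext _ (fun s => 2 * (sin s / sqrt (1 + sin s ^ 2)))).
  - transitivity (2 * RInt (fun s => sin s / sqrt (1 + sin s ^ 2)) 0 (PI/2)).
    + exact (RInt_scal (V := R_CompleteNormedModule) _ 0 (PI/2) 2 (ex_intro _ _ Hquarter)).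
    + rewrite (is_RInt_unique _ _ _ _ Hquarter). field.
  - intros s Hs. rewrite Rmin_left, Rmax_right in Hs by (pose proof PI_RGT_0; lra).
    assert (0 <= sin s) by (apply sin_ge_0; lra).
    rewrite kfun_even, kfun_0 by assumption.
    match goal with |- ?x = ?y => change (@eq R x y) end. ring.
Qed.

(* k_c is uniformly within sqrt c of k_0, since t/(1+t) is 1-Lipschitz on
   t >= 0 and 0 <= E_c - E_0 = c cos^2 s <= c. *)
Lemma kfun_close c s : 0 <= c <= 1 -> Rabs (kfun c s - kfun 0 s) <= sqrt c.
Proof.
  intro Hc. unfold kfun.
  pose proof (Efun_bounds c s Hc) as Ec. pose proof (Efun_bounds 0 s ltac:(lra)) as E0.
  eapply Rle_trans; [apply sqrt_diff_le; apply Rdiv_le_0_compat; lra|].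
  apply sqrt_le_1_alt.
  assert (Hdiff : 0 <= Efun c s - Efun 0 s <= c).
  { unfold Efun. pose proof (pow2_ge_0 (sin s)). pose proof (sin2 s) as H2.
    pose proof (pow2_ge_0 (cos s)). unfold Rsqr in H2. nra. }
  replace (Efun c s / (1 + Efun c s) - Efun 0 s / (1 + Efun 0 s))
    with ((Efun c s - Efun 0 s) / ((1 + Efun c s) * (1 + Efun 0 s))) by (field; lra).
  rewrite Rabs_right by (apply Rle_ge, Rdiv_le_0_compat; nra).
  apply (Rmult_le_reg_r ((1 + Efun c s) * (1 + Efun 0 s))); [nra|].
  unfold Rdiv. rewrite Rmult_assoc, Rinv_l by nra.
  assert (0 <= c * ((1 + Efun c s) * (1 + Efun 0 s) - 1)) by (apply Rmult_le_pos; nra).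
  nra.
Qed.

Lemma Phi_close c : 0 <= c <= 1 -> Rabs (Phi c - PI / 2) <= PI * sqrt c.
Proof.
  intro Hc. rewrite <- Phi_0. unfold Phi.
  assert (Hex : forall c', 0 <= c' <= 1 -> ex_RInt (kfun c') (-(PI/2)) (PI/2))
    by (intros; apply (ex_RInt_continuous (V := R_CompleteNormedModule));
        intros; apply kfun_continuous; auto).
  rewrite <- (RInt_minus (V := R_CompleteNormedModule) (kfun c) (kfun 0))
    by (apply Hex; lra).
  replace (PI * sqrt c) with ((PI / 2 - - (PI / 2)) * sqrt c) by field.
  apply abs_RInt_le_const.
  - pose proof PI_RGT_0; lra.
  - apply (ex_RInt_minus (V := R_NormedModule)); apply Hex; lra.
  - intros; apply kfun_close, Hc.
Qed.

(* The substitution for Xi: w = cos beta tan phi / sin beta, which maps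
   (-beta, beta) onto (-1, 1). *)
Definition Xi_subst (beta phi : R) : R := cos beta * sin phi / (sin beta * cos phi).

(* The substitution w = cb x / (sb y) used for Xi, with x = sin phi,
   y = cos phi, cb = cos beta, sb = sin beta: 1 - w^2 is
   (y^2 - cb^2) / (sb y)^2, positive exactly for |phi| < beta. *)
Lemma Xi_subst_one_minus_sq cb sb x y :
  0 < sb -> cb ^ 2 + sb ^ 2 = 1 -> 0 < y -> x ^ 2 + y ^ 2 = 1 ->
  1 - (cb * x / (sb * y)) ^ 2 = (y ^ 2 - cb ^ 2) / (sb * y) ^ 2.
Proof.
  intros Hsb Hcs Hy Hxy. field_simplify_eq; [| lra].
  replace (x ^ 2) with (1 - y ^ 2) by lra. replace (sb ^ 2) with (1 - cb ^ 2) by lra. ring.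
Qed.

(* Pointwise identity behind Xi = Phi: the Xi integrand equals
   w' / sqrt (1 - w^2) * k_c (asin w) / c  for c = cb^2, where
   w' = cb / (sb y^2) and sin (asin w) = w. *)
Lemma Xi_integrand_identity cb sb x y :
  0 < cb -> 0 < sb -> cb ^ 2 + sb ^ 2 = 1 -> 0 < y -> x ^ 2 + y ^ 2 = 1 -> cb < y ->
  let w := cb * x / (sb * y) in
  let E := cb ^ 2 + (1 - cb ^ 2) * w ^ 2 in
  / (y * sqrt (y ^ 4 - cb ^ 4)) =
  cb / (sb * y ^ 2) / sqrt (1 - w ^ 2) * (/ cb ^ 2 * sqrt (E / (1 + E))).
Proof.
  intros Hcb Hsb Hcs Hy Hxy Hlt w E.
  assert (HE : E / (1 + E) = cb ^ 2 / (y ^ 2 + cb ^ 2)).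
  { assert (Hw2 : w ^ 2 = cb ^ 2 * x ^ 2 / (sb ^ 2 * y ^ 2)) by (unfold w; field; lra).
    unfold E. rewrite Hw2. replace (x ^ 2) with (1 - y ^ 2) by lra.
    replace (1 - cb ^ 2) with (sb ^ 2) by lra. field. nra. }
  assert (H4 : y ^ 4 - cb ^ 4 = (y ^ 2 - cb ^ 2) * (y ^ 2 + cb ^ 2)) by ring.
  assert (0 < sqrt (y ^ 2 - cb ^ 2)) by (apply sqrt_lt_R0; nra).
  assert (0 < sqrt (y ^ 2 + cb ^ 2)) by (apply sqrt_lt_R0; nra).
  unfold w. rewrite Xi_subst_one_minus_sq by assumption.
  rewrite HE, H4, sqrt_div_pow2, sqrt_div_alt, sqrt_pow2, sqrt_mult_alt by nra.
  field. repeat split; nra.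
Qed.

Section XiSubstitution.

Variable beta : R.
Hypothesis Hbeta : 0 < beta < PI / 2.

Lemma cos_beta_lt phi : - beta < phi < beta -> cos beta < cos phi.
Proof.
  intro Hphi. destruct (Rle_dec 0 phi).
  - apply cos_decreasing_1; lra.
  - rewrite <- (cos_neg phi). apply cos_decreasing_1; lra.
Qed.

Lemma Xi_subst_continuous phi : 0 < cos phi -> continuous (Xi_subst beta) phi.
Proof.
  intro Hphi. assert (0 < sin beta) by (apply sin_gt_0; lra).
  apply (ex_derive_continuous (K := R_AbsRing) (V := R_NormedModule)).
  unfold Xi_subst. auto_derive. apply Rgt_not_eq, Rmult_lt_0_compat; lra.
Qed.

Lemma Xi_integrand_continuous phi : - beta < phi < beta ->
  continuous (Xi_integrand (- beta)) phi.
Proof.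
  intro Hphi. pose proof (cos_beta_lt phi Hphi).
  assert (0 < cos beta) by (apply cos_gt_0; lra).
  set (cb := cos beta) in *. set (y := cos phi) in *.
  assert (Hy4 : 0 < y ^ 4 - cb ^ 4)
    by (replace (y ^ 4 - cb ^ 4) with ((y ^ 2 - cb ^ 2) * (y ^ 2 + cb ^ 2)) by ring;
        apply Rmult_lt_0_compat; nra).
  assert (0 < sqrt (y ^ 4 - cb ^ 4)) by (apply sqrt_lt_R0, Hy4).
  apply (ex_derive_continuous (K := R_AbsRing) (V := R_NormedModule)).
  unfold Xi_integrand. rewrite cos_neg. fold cb. auto_derive. fold y.
  replace (y * (y * (y * (y * 1))) + - (cb * (cb * (cb * (cb * 1))))) with (y ^ 4 - cb ^ 4)
    by ring.
  split; [lra | split; [| exact I]]. apply Rgt_not_eq, Rmult_lt_0_compat; lra.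
Qed.

Lemma Xi_subst_interior phi : - beta < phi < beta ->
  -1 < Xi_subst beta phi < 1 /\
  exists dw, is_derive (Xi_subst beta) phi dw /\
    Xi_integrand (- beta) phi = dw / sqrt (1 - Xi_subst beta phi ^ 2) *
      (/ cos beta ^ 2 * kfun (cos beta ^ 2) (asin (Xi_subst beta phi))).
Proof.
  intro Hphi. pose proof (cos_beta_lt phi Hphi) as Hy.
  assert (Hcb : 0 < cos beta) by (apply cos_gt_0; lra).
  assert (Hsb : 0 < sin beta) by (apply sin_gt_0; lra).
  assert (Hcs : cos beta ^ 2 + sin beta ^ 2 = 1)
    by (pose proof (sin2_cos2 beta) as H; unfold Rsqr in H; lra).
  assert (Hxy : sin phi ^ 2 + cos phi ^ 2 = 1)
    by (pose proof (sin2_cos2 phi) as H; unfold Rsqr in H; lra).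
  unfold Xi_subst. set (cb := cos beta) in *. set (sb := sin beta) in *.
  set (x := sin phi) in *. set (y := cos phi) in *.
  assert (H1w : 0 < 1 - (cb * x / (sb * y)) ^ 2).
  { rewrite Xi_subst_one_minus_sq by lra. apply Rdiv_lt_0_compat; nra. }
  split; [nra|]. exists (cb / (sb * y ^ 2)). split.
  - auto_derive; fold x y.
    + apply Rgt_not_eq, Rmult_lt_0_compat; lra.
    + replace (cb / (sb * y ^ 2)) with (cb * (x ^ 2 + y ^ 2) / (sb * y ^ 2))
        by (rewrite Hxy; field; lra).
      field. lra.
  - unfold Xi_integrand, kfun. rewrite cos_neg, Efun_asin by nra. fold cb y.
    apply Xi_integrand_identity; lra.
Qed.

End XiSubstitution.

Lemma Xi_integral beta : 0 < beta < PI / 2 ->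
  improper_integral (Xi_integrand (- beta)) (- beta) beta (/ cos beta ^ 2 * Phi (cos beta ^ 2)).
Proof.
  intros Hb.
  assert (Hcb : 0 < cos beta) by (apply cos_gt_0; lra).
  assert (Hsb : 0 < sin beta) by (apply sin_gt_0; lra).
  assert (Hc : 0 <= cos beta ^ 2 <= 1)
    by (pose proof (sin2_cos2 beta) as H; unfold Rsqr in H; split; nra).
  assert (Ck : forall s, continuous (kfun (cos beta ^ 2)) s)
    by (intro; apply kfun_continuous, Hc).
  replace (/ cos beta ^ 2 * Phi (cos beta ^ 2))
    with (RInt (fun s => / cos beta ^ 2 * kfun (cos beta ^ 2) s) (-(PI/2)) (PI/2)).
  2:{ apply (RInt_scal (V := R_CompleteNormedModule)).
      apply (ex_RInt_continuous (V := R_CompleteNormedModule)). intros; apply Ck. }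
  apply (improper_integral_asin_subst _ (Xi_subst beta)); [lra | | | | | |].
  - intro s. apply (continuous_scal_r (/ cos beta ^ 2) (kfun (cos beta ^ 2))), Ck.
  - apply Xi_subst_continuous; [exact Hb | rewrite cos_neg; lra].
  - unfold Xi_subst. rewrite sin_neg, cos_neg. field. lra.
  - apply Xi_subst_continuous; [exact Hb | lra].
  - unfold Xi_subst. field. lra.
  - intros phi Hphi. destruct (Xi_subst_interior beta Hb phi Hphi) as [Hw Hd].
    split; [exact Hw | split; [apply Xi_integrand_continuous |]]; assumption.
Qed.

(* The substitution for Omega, with c = sin (2a):
   w = sqrt (c / (1-c)) (sin nu - cos nu) / sqrt (sin (2 nu)),
   which maps (a, PI/2 - a) onto (-1, 1). *)
Definition Omega_subst (c nu : R) : R :=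
  sqrt c / sqrt (1 - c) * (sin nu - cos nu) / sqrt (2 * sin nu * cos nu).

(* The integrand Omega's integral becomes in the variable s = asin w. *)
Definition Omega_kernel (c s : R) : R := 2 / c * kfun c s + kodd c s.

(* The substitution used for Omega, with x = sin nu, y = cos nu, t = 2xy and
   c = sin (2a):  w = sqrt (c / (1-c)) (x - y) / sqrt t.  Then
   1 - w^2 = (t - c) / ((1-c) t)  and  E_c (asin w) = c / t. *)
Lemma Omega_subst_sq c x y : 0 < c < 1 -> 0 < x -> 0 < y -> x ^ 2 + y ^ 2 = 1 ->
  (sqrt c / sqrt (1 - c) * (x - y) / sqrt (2 * x * y)) ^ 2
  = c * (1 - 2 * x * y) / ((1 - c) * (2 * x * y)).
Proof.
  intros Hc Hx Hy Hxy.
  assert (0 < sqrt (1 - c)) by (apply sqrt_lt_R0; lra).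
  assert (0 < sqrt (2 * x * y)) by (apply sqrt_lt_R0; nra).
  replace ((sqrt c / sqrt (1 - c) * (x - y) / sqrt (2 * x * y)) ^ 2) with
    (sqrt c ^ 2 * (x - y) ^ 2 / (sqrt (1 - c) ^ 2 * sqrt (2 * x * y) ^ 2)) by (field; lra).
  rewrite !pow2_sqrt by nra. replace ((x - y) ^ 2) with (1 - 2 * x * y) by nra. reflexivity.
Qed.

(* Pointwise identity behind Omega = Phi: the Omega integrand equals
   w' / sqrt (1 - w^2) * ((2/c) k_c + kodd_c) (asin w). *)
Lemma Omega_integrand_identity c x y :
  0 < c < 1 -> 0 < x -> 0 < y -> x ^ 2 + y ^ 2 = 1 -> c < 2 * x * y ->
  let w := sqrt c / sqrt (1 - c) * (x - y) / sqrt (2 * x * y) in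
  let dw := sqrt c / sqrt (1 - c) * (x + y) / (sqrt (2 * x * y) * (2 * x * y)) in
  let E := c + (1 - c) * w ^ 2 in
  / (y * sqrt (x ^ 2 * y ^ 2 - c ^ 2 / 4)) =
  dw / sqrt (1 - w ^ 2) * (2 / c * sqrt (E / (1 + E)) +
                           2 * sqrt (1 - c) / c * w * sqrt (E / ((1 + E) * (E + c)))).
Proof.
  intros Hc Hx Hy Hxy Hct w dw E.
  set (t := 2 * x * y).
  assert (Hw2 : w ^ 2 = c * (1 - t) / ((1 - c) * t)) by (apply Omega_subst_sq; lra).
  assert (HE : E = c / t) by (unfold E; rewrite Hw2; field; unfold t; split; nra).
  assert (H1w : 1 - w ^ 2 = (t - c) / ((1 - c) * t)) by (rewrite Hw2; field; unfold t; split; nra).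
  assert (Hk : E / (1 + E) = c / (t + c)) by (rewrite HE; field; unfold t; split; nra).
  assert (Hkodd : E / ((1 + E) * (E + c)) = t / ((t + c) * (x + y) ^ 2)).
  { rewrite HE. replace ((x + y) ^ 2) with (1 + t) by (unfold t; nra).
    field. unfold t; repeat split; nra. }
  assert (Hroot : x ^ 2 * y ^ 2 - c ^ 2 / 4 = (t - c) * (t + c) / 2 ^ 2) by (unfold t; field).
  rewrite H1w, Hk, Hkodd, Hroot.
  rewrite sqrt_div_pow2, !sqrt_div_alt, !sqrt_mult_alt, sqrt_pow2 by (unfold t in *; nra).
  unfold dw, w. fold t.
  assert (0 < sqrt c) by (apply sqrt_lt_R0; lra).
  assert (0 < sqrt (1 - c)) by (apply sqrt_lt_R0; lra).
  assert (0 < sqrt t) by (apply sqrt_lt_R0; unfold t; nra).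
  assert (0 < sqrt (t - c)) by (apply sqrt_lt_R0; unfold t; nra).
  assert (0 < sqrt (t + c)) by (apply sqrt_lt_R0; unfold t; nra).
  assert (Hsc : sqrt c ^ 2 = c) by (apply pow2_sqrt; lra).
  field_simplify; [| repeat split; unfold t in *; nra ..].
  rewrite Hsc. unfold t in *. field. repeat split; nra.
Qed.

Lemma Omega_subst_continuous c nu : 0 < 2 * sin nu * cos nu -> continuous (Omega_subst c) nu.
Proof.
  intro Hp. apply (ex_derive_continuous (K := R_AbsRing) (V := R_NormedModule)).
  unfold Omega_subst. auto_derive. repeat split; [lra | apply Rgt_not_eq, sqrt_lt_R0, Hp].
Qed.

Lemma Omega_kernel_continuous c s : 0 < c <= 1 -> continuous (Omega_kernel c) s.
Proof.
  intro Hc. apply (continuous_plus (fun s => 2 / c * kfun c s)).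
  - apply (continuous_scal_r (2 / c) (kfun c)), kfun_continuous; lra.
  - apply kodd_continuous, Hc.
Qed.

(* Since kodd_c is odd, only the even part (2/c) k_c contributes. *)
Lemma RInt_Omega_kernel c : 0 < c <= 1 -> RInt (Omega_kernel c) (-(PI/2)) (PI/2) = 2 / c * Phi c.
Proof.
  intro Hc.
  assert (Hex : forall h : R -> R, (forall s, continuous h s) -> ex_RInt h (-(PI/2)) (PI/2))
    by (intros; apply (ex_RInt_continuous (V := R_CompleteNormedModule)); auto).
  assert (Ck : forall s, continuous (kfun c) s) by (intro; apply kfun_continuous; lra).
  assert (Co : forall s, continuous (kodd c) s) by (intro; apply kodd_continuous, Hc).
  assert (Ck' : forall s, continuous (fun s => 2 / c * kfun c s) s)
    by (intro; apply (continuous_scal_r (2 / c) (kfun c)), Ck).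
  unfold Omega_kernel, Phi.
  transitivity (RInt (fun s => 2 / c * kfun c s) (-(PI/2)) (PI/2)
                + RInt (kodd c) (-(PI/2)) (PI/2)).
  - exact (RInt_plus (V := R_CompleteNormedModule) _ _ _ _ (Hex _ Ck') (Hex _ Co)).
  - rewrite (RInt_odd (kodd c)) by (apply Co || apply kodd_odd). rewrite Rplus_0_r.
    exact (RInt_scal (V := R_CompleteNormedModule) _ _ _ (2 / c) (Hex _ Ck)).
Qed.

Section OmegaSubstitution.

Variable a : R.
Hypothesis Ha : 0 < a < PI / 4.

Lemma sin_double_facts :
  0 < 2 * sin a * cos a < 1 /\ sqrt (1 - 2 * sin a * cos a) = cos a - sin a.
Proof.
  pose proof PI_RGT_0.
  assert (Hsa : 0 < sin a) by (apply sin_gt_0; lra).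
  assert (Hsc : sin a ^ 2 + cos a ^ 2 = 1)
    by (pose proof (sin2_cos2 a) as H2; unfold Rsqr in H2; lra).
  assert (Hlt : sin a < cos a)
    by (rewrite <- sin_shift; apply sin_increasing_1; lra).
  split; [split; nra | apply sqrt_lem_1; nra].
Qed.

(* sin (2 nu) > sin (2a) on the open range a < nu < PI/2 - a, via
   sin 2nu - sin 2a = 2 cos (nu + a) sin (nu - a). *)
Lemma sin_double_gt nu : a < nu < PI / 2 - a -> 2 * sin a * cos a < 2 * sin nu * cos nu.
Proof.
  intros Hnu. pose proof PI_RGT_0.
  assert (Hfac : 2 * sin nu * cos nu - 2 * sin a * cos a = 2 * cos (nu + a) * sin (nu - a)).
  { rewrite cos_plus, sin_minus.
    pose proof (sin2_cos2 a) as Ha2. pose proof (sin2_cos2 nu) as Hn2. unfold Rsqr in *.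
    transitivity (2 * sin nu * cos nu * (sin a * sin a + cos a * cos a)
                  - 2 * sin a * cos a * (sin nu * sin nu + cos nu * cos nu));
      [rewrite Ha2, Hn2 | ]; ring. }
  assert (0 < cos (nu + a)) by (apply cos_gt_0; lra).
  assert (0 < sin (nu - a)) by (apply sin_gt_0; lra).
  nra.
Qed.

Lemma Omega_subst_ends :
  Omega_subst (2 * sin a * cos a) a = -1 /\
  Omega_subst (2 * sin a * cos a) (PI / 2 - a) = 1.
Proof.
  destruct sin_double_facts as [Hc Hs1].
  assert (0 < sqrt (2 * sin a * cos a)) by (apply sqrt_lt_R0; lra).
  assert (0 < cos a - sin a) by (rewrite <- Hs1; apply sqrt_lt_R0; lra).
  unfold Omega_subst. rewrite sin_shift, cos_shift, Hs1.
  replace (2 * cos a * sin a) with (2 * sin a * cos a) by ring.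
  split; field; lra.
Qed.

Lemma Omega_integrand_continuous nu : a < nu < PI / 2 - a -> continuous (Omega_integrand a) nu.
Proof.
  intro Hnu. pose proof (sin_double_gt nu Hnu).
  pose proof PI_RGT_0. assert (0 < cos nu) by (apply cos_gt_0; lra).
  assert (Hroot : 0 < sin nu ^ 2 * cos nu ^ 2 - sin a ^ 2 * cos a ^ 2).
  { replace (sin nu ^ 2 * cos nu ^ 2 - sin a ^ 2 * cos a ^ 2) with
      ((sin nu * cos nu - sin a * cos a) * (sin nu * cos nu + sin a * cos a)) by ring.
    destruct sin_double_facts. apply Rmult_lt_0_compat; nra. }
  assert (0 < sqrt (sin nu ^ 2 * cos nu ^ 2 - sin a ^ 2 * cos a ^ 2))
    by (apply sqrt_lt_R0, Hroot).
  apply (ex_derive_continuous (K := R_AbsRing) (V := R_NormedModule)).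
  unfold Omega_integrand. auto_derive.
  replace (sin nu * (sin nu * 1) * (cos nu * (cos nu * 1)) +
           - (sin a * (sin a * 1) * (cos a * (cos a * 1))))
    with (sin nu ^ 2 * cos nu ^ 2 - sin a ^ 2 * cos a ^ 2) by ring.
  split; [lra | split; [| exact I]]. apply Rgt_not_eq, Rmult_lt_0_compat; lra.
Qed.

Lemma Omega_subst_interior nu : a < nu < PI / 2 - a ->
  let c := 2 * sin a * cos a in
  -1 < Omega_subst c nu < 1 /\
  exists dw, is_derive (Omega_subst c) nu dw /\
    Omega_integrand a nu =
      dw / sqrt (1 - Omega_subst c nu ^ 2) * Omega_kernel c (asin (Omega_subst c nu)).
Proof.
  intros Hnu c. pose proof PI_RGT_0.
  destruct sin_double_facts as [Hc _]. fold c in Hc.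
  assert (Ht : c < 2 * sin nu * cos nu) by (apply sin_double_gt, Hnu).
  assert (Hx : 0 < sin nu) by (apply sin_gt_0; lra).
  assert (Hy : 0 < cos nu) by (apply cos_gt_0; lra).
  assert (Hxy : sin nu ^ 2 + cos nu ^ 2 = 1)
    by (pose proof (sin2_cos2 nu) as H2; unfold Rsqr in H2; lra).
  assert (Hca : sin a ^ 2 * cos a ^ 2 = c ^ 2 / 4) by (unfold c; field).
  unfold Omega_integrand, Omega_subst. rewrite Hca.
  set (x := sin nu) in *. set (y := cos nu) in *.
  assert (H1w : 0 < 1 - (sqrt c / sqrt (1 - c) * (x - y) / sqrt (2 * x * y)) ^ 2).
  { rewrite Omega_subst_sq by lra.
    replace (1 - c * (1 - 2 * x * y) / ((1 - c) * (2 * x * y)))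
      with ((2 * x * y - c) / ((1 - c) * (2 * x * y))) by (field; nra).
    apply Rdiv_lt_0_compat; nra. }
  assert (0 < sqrt (2 * x * y)) by (apply sqrt_lt_R0; nra).
  assert (0 < sqrt (1 - c)) by (apply sqrt_lt_R0; lra).
  split; [nra|]. exists (sqrt c / sqrt (1 - c) * (x + y) / (sqrt (2 * x * y) * (2 * x * y))).
  split.
  - auto_derive; fold x y; [repeat split; lra|].
    rewrite sqrt_sqrt by nra.
    replace (sqrt c / sqrt (1 - c) * (x + y) / (sqrt (2 * x * y) * (2 * x * y)))
      with (sqrt c / sqrt (1 - c) * (x + y) * (x ^ 2 + y ^ 2)
            / (sqrt (2 * x * y) * (2 * x * y))) by (rewrite Hxy; field; nra).
    field. nra.
  - unfold Omega_kernel, kfun, kodd. rewrite !Efun_asin, sin_asin by nra.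
    apply Omega_integrand_identity; lra.
Qed.

End OmegaSubstitution.

Lemma Omega_integral a : 0 < a < PI / 4 ->
  improper_integral (Omega_integrand a) a (PI / 2 - a)
    (2 / (2 * sin a * cos a) * Phi (2 * sin a * cos a)).
Proof.
  intros Ha. pose proof PI_RGT_0.
  destruct (sin_double_facts a Ha) as [Hc _].
  destruct (Omega_subst_ends a Ha) as [Wa Wb].
  rewrite <- RInt_Omega_kernel by lra.
  apply (improper_integral_asin_subst _ (Omega_subst (2 * sin a * cos a)));
    [lra | intro; apply Omega_kernel_continuous; lra | | exact Wa | | exact Wb |].
  - apply Omega_subst_continuous. lra.
  - apply Omega_subst_continuous. rewrite sin_shift, cos_shift. lra.
  - intros nu Hnu. destruct (Omega_subst_interior a Ha nu Hnu) as [Hw Hd].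
    split; [exact Hw | split; [apply Omega_integrand_continuous |]]; assumption.
Qed.

Lemma Omega_eq_Phi a : 0 < a < PI / 4 -> Omega a = Phi (2 * sin a * cos a).
Proof.
  intro Ha. unfold Omega. rewrite (improper_int_eq _ _ _ _ (Omega_integral a Ha)).
  assert (0 < sin a) by (apply sin_gt_0; pose proof PI_RGT_0; lra).
  assert (0 < cos a) by (apply cos_gt_0; pose proof PI_RGT_0; lra).
  field. lra.
Qed.

Lemma Xi_eq_Phi beta : 0 < beta < PI / 2 -> Xi (- beta) = Phi (cos beta ^ 2).
Proof.
  intro Hb. unfold Xi. rewrite Ropp_involutive, cos_neg.
  rewrite (improper_int_eq _ _ _ _ (Xi_integral beta Hb)).
  assert (0 < cos beta) by (apply cos_gt_0; lra).
  field. lra.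
Qed.

Lemma limit1_in_Phi (f h : R -> R) D x0 :
  (forall x, D x -> f x = Phi (h x) /\ 0 <= h x <= 1) ->
  limit1_in h D 0 x0 -> limit1_in f D (PI / 2) x0.
Proof.
  intros Hf Hh eps Heps. pose proof PI_RGT_0 as HPI.
  destruct (Hh ((eps / PI) ^ 2)) as [d [Hd Hclose]].
  { apply pow_lt, Rdiv_lt_0_compat; lra. }
  exists d. split; [exact Hd|]. intros x [Dx Hx].
  specialize (Hclose x (conj Dx Hx)). destruct (Hf x Dx) as [-> Hrange].
  simpl in *. unfold R_dist in *. rewrite Rminus_0_r, Rabs_right in Hclose by lra.
  assert (Hsqrt : sqrt (h x) < eps / PI).
  { rewrite <- (sqrt_pow2 (eps / PI)) by (apply Rlt_le, Rdiv_lt_0_compat; lra).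
    apply sqrt_lt_1_alt; lra. }
  eapply Rle_lt_trans; [apply Phi_close, Hrange|].
  apply (Rmult_lt_compat_l PI) in Hsqrt; [| exact HPI].
  replace (PI * (eps / PI)) with eps in Hsqrt by (field; lra). exact Hsqrt.
Qed.

Lemma limit1_in_continuous (h : R -> R) D x0 l : continuous h x0 -> h x0 = l ->
  (forall x, D x -> x <> x0) -> limit1_in h D l x0.
Proof.
  intros Hc <- HD. apply continuity_pt_filterlim in Hc.
  apply (limit1_imp h (D_x no_cond x0)); [| exact Hc].
  intros x Dx. split; [exact I | apply not_eq_sym, HD, Dx].
Qed.

Lemma cos_sq_eq_sin_double a beta : 0 < a < PI / 4 -> 0 < beta < PI / 2 ->
  (cos beta)^4 = 4 * (sin a)^2 * (cos a)^2 -> cos beta ^ 2 = 2 * sin a * cos a.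
Proof.
  intros Ha Hb Hrel. pose proof PI_RGT_0.
  assert (0 < sin a) by (apply sin_gt_0; lra).
  assert (0 < cos a) by (apply cos_gt_0; lra).
  assert (0 < cos beta) by (apply cos_gt_0; lra).
  apply Rsqr_inj; unfold Rsqr; nra.
Qed.

Lemma Omega_limit : limit1_in Omega (fun a => 0 < a < PI / 4) (PI / 2) 0.
Proof.
  pose proof PI_RGT_0.
  apply (limit1_in_Phi _ (fun a => 2 * sin a * cos a)).
  - intros a Ha. split; [apply Omega_eq_Phi, Ha|].
    assert (0 < sin a) by (apply sin_gt_0; lra).
    assert (0 < cos a) by (apply cos_gt_0; lra).
    pose proof (sin2_cos2 a). pose proof (pow2_ge_0 (sin a - cos a)). unfold Rsqr in *.
    split; nra.
  - apply limit1_in_continuous; [| rewrite sin_0; ring | intros x Hx; lra].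
    apply (ex_derive_continuous (K := R_AbsRing) (V := R_NormedModule)). auto_derive. exact I.
Qed.

Lemma Xi_limit :
  limit1_in (fun beta => Xi (- beta)) (fun beta => 0 < beta < PI / 2) (PI / 2) (PI / 2).
Proof.
  apply (limit1_in_Phi _ (fun beta => cos beta ^ 2)).
  - intros beta Hb. split; [apply Xi_eq_Phi, Hb|].
    pose proof (sin2_cos2 beta). pose proof (pow2_ge_0 (sin beta)). unfold Rsqr in *.
    split; nra.
  - apply limit1_in_continuous; [| rewrite cos_PI2; ring | intros x Hx; lra].
    apply (ex_derive_continuous (K := R_AbsRing) (V := R_NormedModule)). auto_derive. exact I.
Qed.

Theorem mainTheorem4 :
  (forall a : R, 0 < a < PI / 4 ->
   forall beta : R, 0 < beta < PI / 2 ->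
   (cos beta)^4 = 4 * (sin a)^2 * (cos a)^2 ->
     (exists l, improper_integral (Omega_integrand a) a (PI/2 - a) l) /\
     (exists l, improper_integral (Xi_integrand (- beta)) (- beta) beta l) /\
     Omega a = Xi (- beta)) /\
  limit1_in Omega (fun a => 0 < a < PI / 4) (PI / 2) 0 /\
  limit1_in (fun beta => Xi (- beta)) (fun beta => 0 < beta < PI / 2) (PI / 2) (PI / 2).
Proof.
  split; [| exact (conj Omega_limit Xi_limit)].
  intros a Ha beta Hb Hrel. split; [| split].
  - eexists; apply Omega_integral, Ha.
  - eexists; apply Xi_integral, Hb.
  - rewrite Omega_eq_Phi, Xi_eq_Phi, (cos_sq_eq_sin_double a beta) by assumption.
    reflexivity.
Qed.
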